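(* Suppose $\sigma$ is an automorphism of the division ring $D$ and the skew polynomial ring $R=D[t;\sigma,\delta]$ is simple. Then there is no monic $f\in R$ of degree $m\ge 2$ such that $S_f$ is nonassociative and $D\subseteq \mathrm{Nuc}_r(S_f)$. In particular, there is no such $f$ with $S_f$ nonassociative and $D\subseteq\mathrm{Nuc}(S_f)$.
   Context: $D$ is an associative division ring, $\sigma$ a ring endomorphism of $D$, $\delta$ a left $\sigma$-derivation ($\delta$ additive, $\delta(ab)=\sigma(a)\delta(b)+\delta(a)b$). $R=D[t;\sigma,\delta]$ is the skew polynomial ring with $ta=\sigma(a)t+\delta(a)$. For monic $f\in R$ of degree $m$, $S_f$ denotes the set of polynomials of degree $<m$ with multiplication $g\circ h=$ remainder of $gh$ upon right division by $f$ (i.e. $gh=qf+r$, $\deg r<m$, and $g\circ h=r$). Associator $[x,y,z]=(xy)z-x(yz)$; $\mathrm{Nuc}_r(A)=\{x:[A,A,x]=0\}$, and $\mathrm{Nuc}(A)$ is the set of $x$ with $[x,A,A]=[A,x,A]=[A,A,x]=0$. $D$ is identified with the constant polynomials in $S_f$. *)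

(* Skew polynomial rings D[t; sigma, delta] over a division
   ring D, represented on the additive group {poly D} (coefficient lists,
   p = \sum_i p`_i t^i with coefficients on the LEFT), with the skew product
   defined below. *)
From HB Require Import structures.
From mathcomp Require Import all_boot all_order all_algebra.
Set Implicit Arguments. Unset Strict Implicit. Unset Printing Implicit Defensive.
Import GRing.Theory.
Local Open Scope ring_scope.

Section Skew.
Variable D : unitRingType.
Variables (sigma delta : D -> D).

Definition division_ring := forall x : D, x != 0 -> x \is a GRing.unit.

Definition left_sigma_derivation :=
  (forall a b, delta (a + b) = delta a + delta b) /\
  (forall a b, delta (a * b) = sigma a * delta b + delta a * b).

(* left multiplication by t: t * (\sum q_j t^j) = \sum (sigma q_j t^(j+1) + delta q_j t^j) *)
Definition tmul (q : {poly D}) : {poly D} :=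
  map_poly sigma q * 'X + map_poly delta q.

Definition skew_mul (p q : {poly D}) : {poly D} :=
  \sum_(i < size p) p`_i *: iter i tmul q.

Definition skew_ideal (I : {poly D} -> Prop) :=
  [/\ I 0, (forall x y, I x -> I y -> I (x + y)), (forall x, I x -> I (- x)),
      (forall r x, I x -> I (skew_mul r x)) & (forall r x, I x -> I (skew_mul x r))].

Definition skew_simple :=
  forall I, skew_ideal I -> (forall x, I x -> x = 0) \/ (forall x, I x).

(* Right division by a monic f: one reduction step kills the leading term of p
   using lead_coef p * t^(deg p - deg f) * f (which has leading coefficient
   lead_coef p since f is monic and sigma(1) = 1). *)
Definition rdiv_step (f p : {poly D}) : {poly D} :=
  p - lead_coef p *: skew_mul 'X^(size p - size f) f.

Fixpoint rmod_fuel (n : nat) (f p : {poly D}) : {poly D} :=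
  match n with
  | 0 => p
  | n'.+1 => if (size p < size f)%N then p else rmod_fuel n' f (rdiv_step f p)
  end.

Definition skew_rmod (p f : {poly D}) : {poly D} := rmod_fuel (size p) f p.

Definition Sf_mul (f g h : {poly D}) : {poly D} := skew_rmod (skew_mul g h) f.

Definition in_Sf (f g : {poly D}) := (size g < size f)%N.

Definition Sf_assoc (f x y z : {poly D}) : {poly D} :=
  Sf_mul f (Sf_mul f x y) z - Sf_mul f x (Sf_mul f y z).

Definition Sf_nonassociative (f : {poly D}) :=
  exists x y z, [/\ in_Sf f x, in_Sf f y, in_Sf f z & Sf_assoc f x y z != 0].

Definition in_Nuc_r (f x : {poly D}) :=
  forall y z, in_Sf f y -> in_Sf f z -> Sf_assoc f y z x = 0.

Definition in_Nuc (f x : {poly D}) :=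
  forall y z, in_Sf f y -> in_Sf f z ->
    [/\ Sf_assoc f x y z = 0, Sf_assoc f y x z = 0 & Sf_assoc f y z x = 0].

End Skew.

(* Let m = deg f.  If every a in D lies in Nuc_r(S_f), the associator
   [t^(m-1), t, a] equals -(f a mod f), so f a lies in Rf: f is semi-invariant.
   The map x |-> (x t^j mod f)_(j < m) is left D-linear into D^(m*m), so some
   nonzero h of degree at most m*m has h t^j in Rf for all j < m.  As every
   polynomial is a sum of terms t^n e (n < m) and c t^k f, semi-invariance and
   surjectivity of sigma give h R in Rf.  Hence {x | x R in Rf} is a nonzero
   two-sided ideal of R, and it is proper because 1 is not in Rf: R is not
   simple. *)

From HB Require Import structures.
From mathcomp Require Import all_boot all_order all_algebra zify.
Set Implicit Arguments. Unset Strict Implicit. Unset Printing Implicit Defensive.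
Import GRing.Theory.
Local Open Scope ring_scope.

Section PolyLeadInduction.
Variable R : nzRingType.

Lemma size_sub_lead (p u : {poly R}) :
  (size u <= size p)%N -> u`_(size p).-1 = lead_coef p ->
  (size (p - u)%R <= (size p).-1)%N.
Proof.
move=> le_up top_u; apply/leq_sizeP => j; rewrite leq_eqVlt => /predU1P [<-|lt_j].
  by rewrite coefB top_u -lead_coefE subrr.
have le_pj : (size p <= j)%N by case: (size p) lt_j.
by rewrite coefB !nth_default ?subrr // (leq_trans le_up).
Qed.

Lemma size_poly_top (p : {poly R}) n :
  (size p <= n.+1)%N -> p`_n != 0 -> size p = n.+1.
Proof.
move=> le_pn pn_neq0; apply/eqP; rewrite eqn_leq le_pn ltnNge.
by apply: contra pn_neq0 => /leq_sizeP ->.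
Qed.

Lemma poly_ind_lead (P : {poly R} -> Prop) :
  P 0 -> (forall p q, P p -> P q -> P (p - q)) ->
  (forall n (c : R), c != 0 -> exists u, [/\ P u, (size u <= n.+1)%N & u`_n = c]) ->
  forall p, P p.
Proof.
move=> P0 PB Plead p; have [n] := ubnP (size p); elim: n p => // n IH p.
rewrite ltnS => le_p_n; have [-> //|p_neq0] := eqVneq p 0.
have lead_p : lead_coef p != 0 by rewrite lead_coef_eq0.
have [u [Pu le_u top_u]] := Plead (size p).-1 _ lead_p.
have PNu : P (- u) by rewrite -sub0r; apply: PB.
rewrite -[p](addrK (- u)); apply: PB => //; apply: IH.
rewrite prednK ?size_poly_gt0 // in le_u.
by move/leq_ltn_trans: (size_sub_lead le_u top_u); apply; rewrite prednK ?size_poly_gt0.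
Qed.

End PolyLeadInduction.

Section DivisionRingLinearAlgebra.
Variable D : unitRingType.
Hypothesis D_div : division_ring D.

Lemma rows_left_dependent n N (w : nat -> nat -> D) : (n < N)%N ->
  exists2 a : nat -> D, exists2 i, (i < N)%N & a i != 0 &
    forall k, (k < n)%N -> \sum_(i < N) a i * w i k = 0.
Proof.
elim: n N w => [|n IH] N w lt_nN.
  by exists (fun=> 1) => //; exists 0%N; rewrite ?oner_neq0.
case: N lt_nN w => // N lt_nN w.
have [/existsP[j w_jn]|] := boolP [exists i : 'I_N.+1, w i n != 0]; last first.
  rewrite negb_exists => /forallP w_n0.
  have [a a_neq0 a_w] := IH N.+1 w (ltnW lt_nN).
  exists a => // k; rewrite ltnS leq_eqVlt => /predU1P [->|]; last exact: a_w.
  by rewrite big1 // => i _; move/negPn/eqP: (w_n0 i) ->; rewrite mulr0.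
(* Gaussian elimination: clear column n with row j and recurse on the other rows. *)
pose l i := w (bump j i) n / w j n.
pose w' i k := w (bump j i) k - l i * w j k.
have [b [i0 lt_i0N b_i0] b_w'] := IH N w' lt_nN.
pose a x := if x == j :> nat then - \sum_(i < N) b i * l i else b (unbump j x).
have a_bump i : a (bump j i) = b i.
  by rewrite /a eq_sym (negbTE (neq_bump _ _)) bumpK.
have a_w k : \sum_(i < N.+1) a i * w i k = \sum_(i < N) b i * w' i k.
  rewrite (bigD1_ord j) //= /a eqxx.
  under eq_bigr do rewrite -/(a _) a_bump.
  under [RHS]eq_bigr do rewrite mulrBr mulrA.
  by rewrite sumrB -mulr_suml mulNr addrC.
exists a.
  exists (bump j i0); last by rewrite a_bump.
  exact: ltn_ord (lift j (Ordinal lt_i0N)).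
move=> k; rewrite ltnS leq_eqVlt a_w => /predU1P [->|]; last exact: b_w'.
by rewrite big1 // => i _; rewrite /w' /l divrK ?subrr ?mulr0 //; apply: D_div.
Qed.

End DivisionRingLinearAlgebra.

Section SkewPolyRing.
Variable D : unitRingType.
Variable sigma : {rmorphism D -> D}.
Variable delta : D -> D.
Hypothesis delta_der : left_sigma_derivation sigma delta.

Local Notation tm := (tmul sigma delta).
Local Notation "p ** q" := (skew_mul sigma delta p q) (at level 40, left associativity).

Lemma deltaD (a b : D) : delta (a + b) = delta a + delta b.
Proof. by case: delta_der. Qed.

Lemma deltaM (a b : D) : delta (a * b) = sigma a * delta b + delta a * b.
Proof. by case: delta_der. Qed.

Lemma delta0 : delta 0 = 0.
Proof. by apply: (addrI (delta 0)); rewrite addr0 -deltaD addr0. Qed.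

Lemma delta1 : delta 1 = 0.
Proof.
have := deltaM 1 1; rewrite mulr1 rmorph1 mul1r mulr1 => delta11.
by apply: (addrI (delta 1)); rewrite addr0 -{1}delta11.
Qed.

Lemma iter_rmorph1 k : iter k sigma 1 = 1.
Proof. by elim: k => //= k ->; rewrite rmorph1. Qed.

Lemma iter_rmorph0 k : iter k sigma 0 = 0.
Proof. by elim: k => //= k ->; rewrite rmorph0. Qed.

Lemma coef_tmul (q : {poly D}) i :
  (tm q)`_i = (if i == 0%N then 0 else sigma q`_i.-1) + delta q`_i.
Proof. by rewrite /tmul coefD coefMX !coef_map_id0 ?delta0 ?rmorph0 //; case: i. Qed.

Lemma tmul0 : tm 0 = 0.
Proof. by apply/polyP => i; rewrite coef_tmul !coef0 rmorph0 delta0 addr0; case: ifP. Qed.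

Lemma tmulD (p q : {poly D}) : tm (p + q) = tm p + tm q.
Proof.
apply/polyP => i; rewrite coefD !coef_tmul !coefD deltaD rmorphD.
by case: ifP; rewrite ?add0r // addrACA.
Qed.

Lemma tmulZ (a : D) (q : {poly D}) : tm (a *: q) = sigma a *: tm q + delta a *: q.
Proof.
apply/polyP => i; rewrite coef_tmul coefD !coefZ coef_tmul deltaM rmorphM mulrDr addrA.
by case: ifP; rewrite ?mulr0 ?add0r.
Qed.

Lemma tmulXn k : tm ('X^k : {poly D}) = 'X^(k.+1).
Proof.
apply/polyP => i; rewrite coef_tmul !coefXn; case: i => [|i] /=.
  by rewrite add0r; case: eqP; rewrite ?delta1 ?delta0.
by rewrite eqSS; case: eqP; case: eqP; rewrite ?rmorph1 ?rmorph0 ?delta1 ?delta0 ?addr0.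
Qed.

Lemma iter_tmul0 k : iter k tm 0 = 0.
Proof. by elim: k => //= k ->; apply: tmul0. Qed.

Lemma iter_tmulD k (p q : {poly D}) : iter k tm (p + q) = iter k tm p + iter k tm q.
Proof. by elim: k => //= k ->; apply: tmulD. Qed.

Lemma iter_tmulXn k j : iter k tm ('X^j : {poly D}) = 'X^(k + j).
Proof. by elim: k => //= k ->; rewrite tmulXn. Qed.

Lemma coef_iter_tmul_ge k (q : {poly D}) j :
  (size q + k <= j)%N -> (iter k tm q)`_j = 0.
Proof.
elim: k j => [|k IH] j /=; first by rewrite addn0 => /leq_sizeP; apply.
rewrite addnS => lt_j; rewrite coef_tmul (IH j) ?delta0 ?addr0; last exact: ltnW.
by case: j lt_j => [//|j] lt_j /=; rewrite IH ?rmorph0.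
Qed.

Lemma coef_iter_tmul_top k (q : {poly D}) : q != 0 ->
  (iter k tm q)`_(size q + k).-1 = iter k sigma (lead_coef q).
Proof.
move=> q_neq0; have sq_gt0 : (0 < size q)%N by rewrite size_poly_gt0.
elim: k => [|k IH] /=; first by rewrite addn0.
rewrite addnS /= coef_tmul (coef_iter_tmul_ge (leqnn _)) delta0 addr0 IH.
by rewrite addn_eq0 (negbTE (lt0n_neq0 sq_gt0)).
Qed.

Lemma skew_mulE n (p q : {poly D}) : (size p <= n)%N ->
  p ** q = \sum_(i < n) p`_i *: iter i tm q.
Proof.
move=> le_pn; rewrite /skew_mul (big_ord_widen n (fun i => p`_i *: iter i tm q) le_pn).
rewrite big_mkcond; apply: eq_bigr => i _; case: ltnP => // le_pi.
by rewrite nth_default // scale0r.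
Qed.

Lemma skew_mul0l (q : {poly D}) : 0 ** q = 0.
Proof. by rewrite /skew_mul size_poly0 big_ord0. Qed.

Lemma skew_mul0r (p : {poly D}) : p ** 0 = 0.
Proof. by rewrite /skew_mul big1 // => i _; rewrite iter_tmul0 scaler0. Qed.

Lemma skew_mulDl (p p' q : {poly D}) : (p + p') ** q = p ** q + p' ** q.
Proof.
pose n := maxn (size p) (size p').
rewrite !(@skew_mulE n) ?leq_maxl ?leq_maxr ?(leq_trans (size_polyD _ _)) //.
by rewrite -big_split; apply: eq_bigr => i _; rewrite coefD scalerDl.
Qed.

Lemma skew_mulDr (p q q' : {poly D}) : p ** (q + q') = p ** q + p ** q'.
Proof.
by rewrite /skew_mul -big_split; apply: eq_bigr => i _; rewrite iter_tmulD scalerDr.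
Qed.

Lemma skew_mulNr (p q : {poly D}) : p ** (- q) = - (p ** q).
Proof. by apply: (addrI (p ** q)); rewrite -skew_mulDr !subrr skew_mul0r. Qed.

Lemma skew_mulBr (p q q' : {poly D}) : p ** (q - q') = p ** q - p ** q'.
Proof. by rewrite skew_mulDr skew_mulNr. Qed.

Lemma skew_mulZl (a : D) (p q : {poly D}) : (a *: p) ** q = a *: (p ** q).
Proof.
rewrite !(@skew_mulE (size p)) ?size_scale_leq // scaler_sumr.
by apply: eq_bigr => i _; rewrite coefZ scalerA.
Qed.

Lemma skew_mulNl (p q : {poly D}) : (- p) ** q = - (p ** q).
Proof. by rewrite -scaleN1r skew_mulZl scaleN1r. Qed.

Lemma skew_mulBl (p p' q : {poly D}) : (p - p') ** q = p ** q - p' ** q.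
Proof. by rewrite skew_mulDl skew_mulNl. Qed.

Lemma skew_mul_suml n (F : 'I_n -> {poly D}) r :
  (\sum_(i < n) F i) ** r = \sum_(i < n) (F i ** r).
Proof. exact: (big_morph (fun p => p ** r) (fun p q => skew_mulDl p q r) (skew_mul0l r)). Qed.

Lemma skew_mulXn k (q : {poly D}) : 'X^k ** q = iter k tm q.
Proof.
rewrite /skew_mul size_polyXn big_ord_recr /= big1 ?add0r.
  by rewrite coefXn eqxx scale1r.
by move=> i _; rewrite coefXn ltn_eqF // scale0r.
Qed.

Lemma skew_mul1l (q : {poly D}) : 1 ** q = q.
Proof. by rewrite -(expr0 'X) skew_mulXn. Qed.

Lemma skew_mulXnX k : ('X^k : {poly D}) ** 'X = 'X^(k.+1).
Proof. by rewrite skew_mulXn -(expr1 'X) iter_tmulXn addn1. Qed.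

Lemma tmul_skew_mul (p q : {poly D}) : tm (p ** q) = tm p ** q.
Proof.
have size_tmp : (size (tm p) <= (size p).+1)%N.
  by apply/leq_sizeP => j; have := @coef_iter_tmul_ge 1 p j; rewrite addn1; apply.
rewrite (@skew_mulE (size p) p) // (@skew_mulE (size p).+1 (tm p)) //.
rewrite (big_morph tm tmulD tmul0); under eq_bigr do rewrite tmulZ.
under [RHS]eq_bigr do rewrite coef_tmul scalerDl.
rewrite big_split /= [RHS]big_split /= big_ord_recl /= scale0r add0r.
rewrite [X in _ = _ + X]big_ord_recr /= nth_default // delta0 scale0r addr0.
by congr (_ + _); apply: eq_bigr.
Qed.

Lemma iter_tmul_skew_mul k (p q : {poly D}) : iter k tm (p ** q) = iter k tm p ** q.
Proof. by elim: k => //= k ->; rewrite tmul_skew_mul. Qed.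

Lemma skew_mulA (p q r : {poly D}) : p ** (q ** r) = (p ** q) ** r.
Proof.
rewrite (@skew_mulE (size p) p) // (@skew_mulE (size p) p q) // skew_mul_suml.
by apply: eq_bigr => i _; rewrite iter_tmul_skew_mul skew_mulZl.
Qed.

Lemma coef_skew_mul_ge (p q : {poly D}) j :
  (size p + size q <= j.+1)%N -> (p ** q)`_j = 0.
Proof.
move=> le_j; rewrite /skew_mul coef_sum big1 // => i _.
by rewrite coefZ coef_iter_tmul_ge ?mulr0 //; have := ltn_ord i; lia.
Qed.

Lemma size_skew_mul_leq (p q : {poly D}) : (size (p ** q) <= (size p + size q).-1)%N.
Proof. by apply/leq_sizeP => j le_j; apply: coef_skew_mul_ge; lia. Qed.

Lemma coef_skew_mul_top (p q : {poly D}) : p != 0 -> q != 0 ->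
  (p ** q)`_(size p + size q).-2 = lead_coef p * iter (size p).-1 sigma (lead_coef q).
Proof.
move=> p_neq0 q_neq0; rewrite /skew_mul coef_sum lead_coefE.
have [sp_gt0 sq_gt0] : (0 < size p)%N /\ (0 < size q)%N by rewrite !size_poly_gt0.
case: (size p) sp_gt0 => [//|n] _ /=.
rewrite big_ord_recr /= big1 ?add0r; first by rewrite coefZ -coef_iter_tmul_top // addnC.
move=> i _; rewrite coefZ coef_iter_tmul_ge ?mulr0 //.
by have := ltn_ord i; case: (size q) sq_gt0 => // s _; lia.
Qed.

Section TopCoefficient.
Variables p q : {poly D}.
Hypotheses (p_neq0 : p != 0) (q_neq0 : q != 0).
Hypothesis top_neq0 : lead_coef p * iter (size p).-1 sigma (lead_coef q) != 0.

Lemma size_skew_mul : size (p ** q) = (size p + size q).-1.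
Proof.
have [sp_gt0 sq_gt0] : (0 < size p)%N /\ (0 < size q)%N by rewrite !size_poly_gt0.
have size_pq : (size p + size q).-1 = (size p + size q).-2.+1.
  by move: (size p) (size q) sp_gt0 sq_gt0 => a b; lia.
rewrite size_pq; apply: size_poly_top; last by rewrite coef_skew_mul_top.
by rewrite -size_pq size_skew_mul_leq.
Qed.

Lemma lead_coef_skew_mul :
  lead_coef (p ** q) = lead_coef p * iter (size p).-1 sigma (lead_coef q).
Proof. by rewrite lead_coefE size_skew_mul -coef_skew_mul_top. Qed.

End TopCoefficient.

Lemma size_skew_mulC (p : {poly D}) a : (size (p ** a%:P) <= size p)%N.
Proof.
apply: leq_trans (size_skew_mul_leq _ _) _.
by case: (size a%:P) (size_polyC_leq1 a) => [|[|]] // _; rewrite ?addn0 ?addn1 // leq_pred.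
Qed.

Definition in_Rf (f p : {poly D}) := exists q, p = q ** f.

Lemma in_Rf0 (f : {poly D}) : in_Rf f 0.
Proof. by exists 0; rewrite skew_mul0l. Qed.

Lemma in_RfD (f p p' : {poly D}) : in_Rf f p -> in_Rf f p' -> in_Rf f (p + p').
Proof. by move=> [q ->] [q' ->]; exists (q + q'); rewrite skew_mulDl. Qed.

Lemma in_RfN (f p : {poly D}) : in_Rf f p -> in_Rf f (- p).
Proof. by move=> [q ->]; exists (- q); rewrite skew_mulNl. Qed.

Lemma in_Rf_mull (f r p : {poly D}) : in_Rf f p -> in_Rf f (r ** p).
Proof. by move=> [q ->]; exists (r ** q); rewrite skew_mulA. Qed.

Section MonicRightDivision.
Variable f : {poly D}.
Hypothesis f_monic : f \is monic.

Local Notation rmod p := (skew_rmod sigma delta p f).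

Lemma size_monic_gt0 : (0 < size f)%N.
Proof. by rewrite size_poly_gt0 monic_neq0. Qed.

Lemma monic_top_neq0 (q : {poly D}) :
  q != 0 -> lead_coef q * iter (size q).-1 sigma (lead_coef f) != 0.
Proof. by rewrite (monicP f_monic) iter_rmorph1 mulr1 lead_coef_eq0. Qed.

Lemma size_skew_mul_monic (q : {poly D}) :
  q != 0 -> size (q ** f) = (size q + size f).-1.
Proof.
by move=> q_neq0; rewrite size_skew_mul // ?monic_top_neq0 //; apply: monic_neq0.
Qed.

Lemma lead_coef_skew_mul_monic (q : {poly D}) : q != 0 -> lead_coef (q ** f) = lead_coef q.
Proof.
move=> q_neq0; rewrite lead_coef_skew_mul ?monic_top_neq0 //; last exact: monic_neq0.
by rewrite (monicP f_monic) iter_rmorph1 mulr1.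
Qed.

Lemma leq_size_skew_mul_monic (q : {poly D}) : q != 0 -> (size f <= size (q ** f))%N.
Proof.
move=> q_neq0; rewrite size_skew_mul_monic // -subn1 -addnBAC ?leq_addl //.
by rewrite size_poly_gt0.
Qed.

Lemma size_rdiv_step (p : {poly D}) :
  (size f <= size p)%N -> (size (rdiv_step sigma delta f p) < size p)%N.
Proof.
move=> le_fp; have sp_gt0 := leq_trans size_monic_gt0 le_fp.
rewrite /rdiv_step; set k := (size p - size f)%N.
have Xk_neq0 : ('X^k : {poly D}) != 0 by rewrite monic_neq0 ?monicXn.
have size_Xkf : size ('X^k ** f) = size p.
  by rewrite size_skew_mul_monic // size_polyXn addSn subnK.
have lead_Xkf : lead_coef ('X^k ** f) = 1.
  by rewrite lead_coef_skew_mul_monic // lead_coefXn.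
have le_u : (size (lead_coef p *: ('X^k ** f)) <= size p)%N.
  by rewrite (leq_trans (size_scale_leq _ _)) ?size_Xkf.
have top_u : (lead_coef p *: ('X^k ** f))`_(size p).-1 = lead_coef p.
  by rewrite coefZ -size_Xkf -lead_coefE lead_Xkf mulr1.
by apply: leq_ltn_trans (size_sub_lead le_u top_u) _; rewrite prednK.
Qed.

Lemma rmod_fuelP n (p : {poly D}) : (size p <= n)%N ->
  exists q, p = q ** f + rmod_fuel sigma delta n f p /\
            (size (rmod_fuel sigma delta n f p) < size f)%N.
Proof.
elim: n p => [|n IH] p le_pn /=.
  move: le_pn; rewrite leqn0 size_poly_eq0 => /eqP ->.
  by exists 0; rewrite skew_mul0l add0r size_poly0 size_monic_gt0.
case: ltnP => [lt_pf|le_fp]; first by exists 0; rewrite skew_mul0l add0r.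
have [|q [def_p lt_r]] := IH (rdiv_step sigma delta f p).
  by rewrite -ltnS (leq_trans (size_rdiv_step le_fp)).
exists (q + lead_coef p *: 'X^(size p - size f)); split=> //.
by rewrite skew_mulDl skew_mulZl addrAC -def_p subrK.
Qed.

Lemma skew_rmodP (p : {poly D}) :
  exists q, p = q ** f + rmod p /\ (size (rmod p) < size f)%N.
Proof. exact: rmod_fuelP. Qed.

Lemma skew_rmod_uniq (p q r : {poly D}) :
  (size r < size f)%N -> p = q ** f + r -> rmod p = r.
Proof.
move=> lt_rf def_p; have [q' [def_p' lt_r'f]] := skew_rmodP p.
have : (q - q') ** f = rmod p - r.
  rewrite skew_mulBl; have -> : q ** f = p - r by rewrite def_p addrK.
  have -> : q' ** f = p - rmod p by rewrite {1}def_p' addrK.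
  by rewrite opprB addrC addrA subrK.
have [-> | qq'_neq0 eq_qq'] := eqVneq (q - q') 0.
  by rewrite skew_mul0l => /eqP; rewrite eq_sym subr_eq0 => /eqP.
have := leq_size_skew_mul_monic qq'_neq0; rewrite eq_qq' => le_f.
have := leq_trans le_f (size_polyD (rmod p) (- r)).
by rewrite leq_max size_polyN leqNgt lt_r'f leqNgt lt_rf.
Qed.

Lemma skew_rmod_small (r : {poly D}) : (size r < size f)%N -> rmod r = r.
Proof. by move=> lt_rf; apply: (skew_rmod_uniq (q := 0)); rewrite ?skew_mul0l ?add0r. Qed.

Lemma skew_rmodD (p p' : {poly D}) : rmod (p + p') = rmod p + rmod p'.
Proof.
have [q [def_p lt_r]] := skew_rmodP p; have [q' [def_p' lt_r']] := skew_rmodP p'.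
apply: (skew_rmod_uniq (q := q + q')).
  by apply: leq_ltn_trans (size_polyD _ _) _; rewrite gtn_max lt_r lt_r'.
by rewrite skew_mulDl {1}def_p {1}def_p' addrACA.
Qed.

Lemma skew_rmodZ (a : D) (p : {poly D}) : rmod (a *: p) = a *: rmod p.
Proof.
have [q [def_p lt_r]] := skew_rmodP p.
apply: (skew_rmod_uniq (q := a *: q)); last by rewrite skew_mulZl {1}def_p scalerDr.
exact: leq_ltn_trans (size_scale_leq _ _) lt_r.
Qed.

Lemma skew_rmod0 : rmod 0 = 0.
Proof. by rewrite skew_rmod_small // size_poly0 size_monic_gt0. Qed.

Lemma skew_rmod_sum n (F : 'I_n -> {poly D}) :
  rmod (\sum_(i < n) F i) = \sum_(i < n) rmod (F i).
Proof. exact: (big_morph (fun p => rmod p) skew_rmodD skew_rmod0). Qed.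

Lemma skew_rmod_eq0 (p : {poly D}) : rmod p = 0 -> in_Rf f p.
Proof.
move=> rmod_p0; have [q [def_p _]] := skew_rmodP p.
by exists q; rewrite {1}def_p rmod_p0 addr0.
Qed.

End MonicRightDivision.

Definition semi_invariant (f : {poly D}) := forall a, in_Rf f (f ** a%:P).

Section RightNucleus.
Variable f : {poly D}.
Hypotheses (f_monic : f \is monic) (f_size : (3 <= size f)%N).

Local Notation rmod p := (skew_rmod sigma delta p f).

Lemma semi_invariant_of_Nuc_r :
  (forall a, in_Nuc_r sigma delta f a%:P) -> semi_invariant f.
Proof.
move=> D_nuc a; have a_nuc := D_nuc a; set M := (size f).-1.
have size_f : size f = M.+1 by rewrite prednK // (leq_trans _ f_size).
have [r [XM_eq lt_rf]] : exists r, 'X^M = r + f /\ (size r < size f)%N.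
  exists ('X^M - f); split; first by rewrite subrK.
  have := @size_sub_lead _ 'X^M f; rewrite size_polyXn -size_f leqnn -lead_coefE.
  by rewrite (monicP f_monic) lead_coefXn => /(_ isT erefl); rewrite size_f.
have rmod_XM : rmod 'X^M = r.
  by apply: (skew_rmod_uniq f_monic (q := 1)); rewrite // skew_mul1l addrC.
have lt_ra : (size (r ** a%:P) < size f)%N := leq_ltn_trans (size_skew_mulC _ _) lt_rf.
have lt_Xa : (size ('X ** a%:P) < size f)%N.
  by rewrite (leq_ltn_trans (size_skew_mulC _ _)) // size_polyX.
have M_gt0 : (0 < M)%N by rewrite -ltnS -size_f ltnW.
have in_Sf_XM1 : in_Sf f 'X^(M.-1) by rewrite /in_Sf size_polyXn prednK // size_f.
have in_Sf_X : in_Sf f 'X by rewrite /in_Sf size_polyX; apply: f_size.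
(* The associator [t^(M-1), t, a] reduces to -(f a mod f). *)
have := a_nuc _ _ in_Sf_XM1 in_Sf_X; rewrite /Sf_assoc /Sf_mul.
rewrite skew_mulXnX prednK // rmod_XM (skew_rmod_small f_monic lt_ra).
rewrite (skew_rmod_small f_monic lt_Xa) skew_mulA skew_mulXnX prednK //.
rewrite XM_eq skew_mulDl skew_rmodD // (skew_rmod_small f_monic lt_ra).
by rewrite opprD addrA subrr sub0r => /eqP; rewrite oppr_eq0 => /eqP /skew_rmod_eq0; apply.
Qed.

End RightNucleus.

Definition in_bound (f x : {poly D}) := forall y, in_Rf f (x ** y).

Lemma bound_ideal f : skew_ideal sigma delta (in_bound f).
Proof.
split=> [y | x x' Hx Hx' y | x Hx y | r x Hx y | r x Hx y].
- by rewrite skew_mul0l; apply: in_Rf0.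
- by rewrite skew_mulDl; apply: in_RfD.
- by rewrite skew_mulNl; apply: in_RfN.
- by rewrite -skew_mulA; apply: in_Rf_mull.
- by rewrite -skew_mulA; apply: Hx.
Qed.

Lemma not_in_bound1 f : f \is monic -> (2 <= size f)%N -> ~ in_bound f 1.
Proof.
move=> f_monic f_size /(_ 1) [q]; rewrite skew_mul1l => one_eq.
have q_neq0 : q != 0 by apply: contra_eq_neq one_eq => ->; rewrite skew_mul0l oner_neq0.
by have := leq_size_skew_mul_monic f_monic q_neq0; rewrite -one_eq size_poly1 leqNgt f_size.
Qed.

Section BoundOverDivisionRing.
Hypothesis D_div : division_ring D.
Variable f : {poly D}.
Hypotheses (f_monic : f \is monic) (f_size : (2 <= size f)%N).

Local Notation rmod p := (skew_rmod sigma delta p f).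
Local Notation M := (size f).-1.

Lemma exists_right_annihilator :
  exists2 h, h != 0 & forall j, (j < M)%N -> in_Rf f (h ** 'X^j).
Proof.
have size_f : size f = M.+1 by rewrite prednK // ltnW.
have M_gt0 : (0 < M)%N by rewrite -ltnS -size_f.
(* Column k = j * M + l records the coefficient of t^l in t^i t^j mod f, so a
   vanishing combination of the M * M + 1 rows gives h with h t^j = 0 mod f. *)
pose w i k := (rmod ('X^i ** 'X^(k %/ M)))`_(k %% M).
have [a [i0 lt_i0 a_i0] a_w] := rows_left_dependent D_div w (ltnSn (M * M)).
exists (\poly_(i < (M * M).+1) a i).
  by apply/eqP => /polyP /(_ i0); rewrite coef_poly lt_i0 coef0; apply/eqP.
move=> j lt_jM; apply: skew_rmod_eq0 => //; apply/polyP => l; rewrite coef0.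
rewrite poly_def skew_mul_suml skew_rmod_sum // coef_sum.
under eq_bigr do rewrite skew_mulZl (skew_rmodZ f_monic) coefZ.
have [lt_lM|le_Ml] := ltnP l M.
  have := a_w (j * M + l)%N; rewrite /w divnMDl // modnMDl.
  rewrite (divn_small lt_lM) (modn_small lt_lM) addn0; apply.
  apply: (@leq_trans (j.+1 * M)); first by rewrite mulSn addnC ltn_add2r.
  by rewrite leq_mul2r lt_jM orbT.
rewrite big1 // => i _; have [_ [_ lt_rf]] := skew_rmodP f_monic ('X^i ** 'X^j).
rewrite nth_default ?mulr0 //; apply: leq_trans le_Ml.
by rewrite -ltnS -size_f.
Qed.

End BoundOverDivisionRing.

Lemma in_bound_monomials (g : D -> D) f h : cancel g sigma -> f \is monic ->
  semi_invariant f -> (forall j, (j < (size f).-1)%N -> in_Rf f (h ** 'X^j)) ->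
  in_bound f h.
Proof.
move=> gK f_monic f_semi h_ann; set M := (size f).-1.
apply: poly_ind_lead => [|p q|n c c_neq0].
- by rewrite skew_mul0r; apply: in_Rf0.
- by rewrite skew_mulBr => Hp Hq; apply: in_RfD Hp (in_RfN Hq).
have [lt_nM|le_Mn] := ltnP n M.
  have iter_gK k x : iter k sigma (iter k g x) = x.
    by elim: k x => // k IH x; rewrite [iter k.+1 sigma _]iterSr [iter k.+1 g _]iterS gK.
  pose e := iter n g c; have sigma_e : iter n sigma e = c := iter_gK n c.
  have e_neq0 : e != 0 by apply: contra_neq c_neq0 => e0; rewrite -sigma_e e0 iter_rmorph0.
  exists ('X^n ** e%:P); split.
  - rewrite skew_mulA; have [q ->] := h_ann n lt_nM.
    by rewrite -skew_mulA; apply: in_Rf_mull.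
  - by apply: leq_trans (size_skew_mul_leq _ _) _; rewrite size_polyXn size_polyC e_neq0 addn1.
  - have eP_neq0 : e%:P != 0 by rewrite polyC_eq0.
    have := coef_skew_mul_top (monic_neq0 (monicXn _ n)) eP_neq0.
    by rewrite size_polyXn size_polyC e_neq0 addn1 lead_coefXn lead_coefC mul1r sigma_e.
have size_Xf : size ('X^(n - M) ** f) = n.+1.
  rewrite size_skew_mul_monic ?monic_neq0 ?monicXn // size_polyXn addSn /=.
  by rewrite -[size f](prednK (size_monic_gt0 f_monic)) addnS subnK.
exists (c *: ('X^(n - M) ** f)); split.
- by rewrite -skew_mulZl skew_mulA; exists (h ** (c *: 'X^(n - M))).
- by rewrite (leq_trans (size_scale_leq _ _)) ?size_Xf.
- have := lead_coef_skew_mul_monic f_monic (monic_neq0 (monicXn _ (n - M))).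
  by rewrite lead_coefXn lead_coefE size_Xf coefZ => ->; rewrite mulr1.
Qed.

Lemma Nuc_r_constants_not_simple (g : D -> D) f :
  division_ring D -> cancel g sigma -> f \is monic -> (3 <= size f)%N ->
  (forall a, in_Nuc_r sigma delta f a%:P) -> ~ skew_simple sigma delta.
Proof.
move=> D_div gK f_monic f_size D_nuc R_simple; have f_size2 := ltnW f_size.
have [h h_neq0 h_ann] := exists_right_annihilator D_div f_monic f_size2.
have f_semi := semi_invariant_of_Nuc_r f_monic f_size D_nuc.
have h_bound := in_bound_monomials gK f_monic f_semi h_ann.
have [bound0 | boundT] := R_simple _ (bound_ideal f).
  by move/eqP: h_neq0; apply; apply: bound0 h_bound.
by apply: (not_in_bound1 f_monic f_size2); apply: boundT.
Qed.

End SkewPolyRing.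

Theorem mainTheorem2 (D : unitRingType) (sigma : {rmorphism D -> D})
    (delta : D -> D) :
  division_ring D -> bijective sigma ->
  left_sigma_derivation sigma delta ->
  skew_simple sigma delta ->
  (~ exists f : {poly D}, [/\ f \is monic, (3 <= size f)%N,
        Sf_nonassociative sigma delta f &
        forall a : D, in_Nuc_r sigma delta f a%:P]) /\
  (~ exists f : {poly D}, [/\ f \is monic, (3 <= size f)%N,
        Sf_nonassociative sigma delta f &
        forall a : D, in_Nuc sigma delta f a%:P]).
Proof.
move=> D_div [g _ gK] delta_der R_simple.
have no_Nuc_r : ~ exists f : {poly D}, [/\ f \is monic, (3 <= size f)%N,
    Sf_nonassociative sigma delta f & forall a : D, in_Nuc_r sigma delta f a%:P].
  case=> f [f_monic f_size _ D_nuc].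
  exact: (Nuc_r_constants_not_simple delta_der D_div gK f_monic f_size D_nuc R_simple).
split=> //; case=> f [f_monic f_size f_nonassoc D_nuc]; apply: no_Nuc_r.
by exists f; split=> // a y z y_Sf z_Sf; case: (D_nuc a y z y_Sf z_Sf).
Qed.
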